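(* Let $K$ be a field, $c\in K\setminus\{0\}$, $n\ge1$, and let $f$ be a $c$-frieze of order $n$ over $K$. For every even $k$ with $-1\le k\le n+2$, the sequence $(f(i,i+k-1))_{i\in\mathbb{Z}}$ (row $k$) is periodic with (least) period a divisor of $n+3$. If $n$ is even, then for every odd $k$ with $-1\le k\le n+2$, row $k$ is periodic with (least) period a divisor of $2n+6$.
   Context: The $c$-continuant polynomials $P_k=P_k^c$ ($k\ge-1$) are defined by $P_{-1}=0$, $P_0=1$, and for $k\ge1$, $P_k(x_1,\dots,x_k)=x_kP_{k-1}(x_1,\dots,x_{k-1})+cP_{k-2}(x_1,\dots,x_{k-2})$. A family $(x_i)_{i\in\mathbb{Z}}$ in $K$ is $n$-admissible if $P_{n+2}(x_i,\dots,x_{i+n+1})=0$ for all $i$. Let $\mathbb{B}_n=\{(i,j)\in\mathbb{Z}^2:-2\le j-i\le n+1\}$. A $c$-frieze of order $n$ is a function $f:\mathbb{B}_n\to K$ for which there is an $n$-admissible family $(x_i)$ with $f(i,j)=P_{j-i+1}(x_i,\dots,x_j)$ for all $(i,j)\in\mathbb{B}_n$. Row $k$ of $f$ is the sequence $(f(i,i+k-1))_{i\in\mathbb{Z}}$; it is periodic of period $p$ if $f(i+p,i+k-1+p)=f(i,i+k-1)$ for all $i$ and $p$ is the least positive integer with this property. *)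

From HB Require Import structures.
From mathcomp Require Import all_boot all_order all_algebra.
Set Implicit Arguments. Unset Strict Implicit. Unset Printing Implicit Defensive.
Import Order.TTheory GRing.Theory Num.Theory.
Local Open Scope ring_scope.

Section Frieze.
Variables (K : fieldType) (c : K).

(* Helper: for r = rev [:: x_1; ...; x_k], returns (P_k, P_{k-1}). *)
Fixpoint cont_pair (r : seq K) : K * K :=
  match r with
  | [::] => (1, 0)
  | x :: r' => let: (a, b) := cont_pair r' in (x * a + c * b, a)
  end.

(* The c-continuant P_k(x_1,...,x_k) for k >= 0, with s = [:: x_1; ...; x_k]:
   P_0 = 1, P_k = x_k P_{k-1} + c P_{k-2} (with P_{-1} = 0). *)
Definition continuant (s : seq K) : K := (cont_pair (rev s)).1.

Definition window (x : int -> K) (i : int) (m : nat) : seq K :=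
  [seq x (i + (k%:Z)) | k <- iota 0 m].

Definition admissible (n : nat) (x : int -> K) : Prop :=
  forall i : int, continuant (window x i n.+2) = 0.

(* P_{j-i+1}(x_i,...,x_j), with P_{-1} = 0 (case j - i = -2). *)
Definition frieze_value (x : int -> K) (i j : int) : K :=
  if j - i + 1 < 0 then 0 else continuant (window x i (absz (j - i + 1))).

Definition is_frieze (n : nat) (f : int -> int -> K) : Prop :=
  exists x : int -> K, admissible n x /\
    forall i j : int, -2 <= j - i <= n%:Z + 1 -> f i j = frieze_value x i j.

Definition row_has_period (f : int -> int -> K) (k : int) (p : nat) : Prop :=
  (0 < p)%N /\ forall i : int, f (i + p%:Z) (i + k - 1 + p%:Z) = f i (i + k - 1).

Definition row_least_period (f : int -> int -> K) (k : int) (p : nat) : Prop :=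
  row_has_period f k p /\ forall q : nat, (0 < q < p)%N -> ~ row_has_period f k q.

End Frieze.

From HB Require Import structures.
From mathcomp Require Import all_boot all_order all_algebra.
From mathcomp Require Import ring zify.
From Stdlib Require Import Classical.
Set Implicit Arguments. Unset Strict Implicit.
Import Order.TTheory GRing.Theory Num.Theory.
Local Open Scope ring_scope.

(* Write P_m(i) for the continuant of the window (x_i, ..., x_(i+m-1)).  Two
   consecutive continuants never both vanish when c <> 0, so in an n-admissible
   family P_(n+1)(i) <> 0.  Expanding P_(n+3)(j) along its last and its first
   entry, where the P_(n+2) terms vanish, gives P_(n+1)(j+2) = P_(n+1)(j) and
   x_(j+n+3) P_(n+1)(j) = x_j P_(n+1)(j+1).  Hence translating the family by n+3
   rescales the x_i alternately by r and 1/r, with r = P_(n+1)(i+1) / P_(n+1)(i),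
   which multiplies the continuants of even length by 1 and those of odd length
   by r.  Translating twice multiplies them by r r', and r' = 1/r when n is even,
   whatever the parity of the row.  The least period divides every period. *)

Section Continuant.
Variables (K : fieldType) (c : K).

Lemma continuant_seq1 a : continuant c [:: a] = a.
Proof. by rewrite /continuant /= mulr1 mulr0 addr0. Qed.

Lemma continuant_rcons2 s a b :
  continuant c (rcons (rcons s a) b) = b * continuant c (rcons s a) + c * continuant c s.
Proof.
rewrite /continuant !rev_rcons /=.
by case: (cont_pair c (rev s)).
Qed.

Lemma continuant_cons2 a b s :
  continuant c [:: a, b & s] = a * continuant c (b :: s) + c * continuant c s.
Proof.
pose expand t := continuant c [:: a, b & t] = a * continuant c (b :: t) + c * continuant c t.
suff /(_ s)[] : forall t, expand t /\ forall z, expand (rcons t z) by [].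
elim/last_ind=> [|t y [IH IHy]].
  by split=> [|z]; rewrite /expand /continuant /=; ring.
split=> // z; rewrite /expand -!rcons_cons !continuant_rcons2 !rcons_cons.
by rewrite (IHy y) IH; ring.
Qed.

End Continuant.

Section Windows.
Variables (K : fieldType) (c : K) (x : int -> K).
Local Notation P i m := (continuant c (window x i m)).

Lemma window_rcons i m : window x i m.+1 = rcons (window x i m) (x (i + m%:Z)).
Proof. by rewrite /window -addn1 iotaD map_cat cats1. Qed.

Lemma window_cons i m : window x i m.+1 = x i :: window x (i + 1) m.
Proof.
rewrite /window /= addr0 -[1%N]addn0 iotaDl -map_comp; congr (_ :: _).
by apply: eq_map => k /=; rewrite PoszD addrA.
Qed.

Lemma continuant_window1 i : P i 1 = x i.
Proof. by rewrite /window /= addr0 continuant_seq1. Qed.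

Lemma continuant_windowSSr i m : P i m.+2 = x (i + m.+1%:Z) * P i m.+1 + c * P i m.
Proof. by rewrite window_rcons [window _ _ m.+1]window_rcons continuant_rcons2 -window_rcons. Qed.

Lemma continuant_windowSSl i m : P i m.+2 = x i * P (i + 1) m.+1 + c * P (i + 2) m.
Proof. by rewrite window_cons window_cons continuant_cons2 -window_cons -addrA. Qed.

Lemma continuant_windowS_eq0 i m : c != 0 -> P i m.+1 = 0 -> P i m != 0.
Proof.
move=> c_neq0; elim: m => [|m IH]; first by rewrite oner_neq0.
rewrite continuant_windowSSr => Pm2_eq0; apply/eqP => Pm1_eq0.
move: Pm2_eq0 (IH Pm1_eq0); rewrite Pm1_eq0 mulr0 add0r => /eqP.
by rewrite mulf_eq0 (negbTE c_neq0) => /= ->.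
Qed.

End Windows.

Lemma continuant_window_scale (K : fieldType) (c : K) (x y : int -> K) i j t u :
    t * u = 1 -> (forall k : nat, y (j + k%:Z) = x (i + k%:Z) * (if odd k then u else t)) ->
  forall m, continuant c (window y j m) = continuant c (window x i m) * (if odd m then t else 1).
Proof.
move=> tu y_scaled; elim/ltn_ind=> -[|[|m]] IH.
- by rewrite /= mulr1.
- by rewrite !continuant_window1 /=; have := y_scaled 0%N; rewrite !addr0.
rewrite !continuant_windowSSr y_scaled !IH //=.
by case: (odd m) => /=; [ring | rewrite -tu; ring].
Qed.

Section Admissible.
Variables (K : fieldType) (c : K) (n : nat) (x : int -> K).
Hypotheses (c_neq0 : c != 0) (x_adm : admissible c n x).
Local Notation P i m := (continuant c (window x i m)).

Lemma admissible_penultimate_neq0 i : P i n.+1 != 0.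
Proof. exact: continuant_windowS_eq0 c_neq0 (x_adm i). Qed.

Lemma admissible_penultimate_shift2 i : P (i + 2) n.+1 = P i n.+1.
Proof.
have := continuant_windowSSr c x i n.+1.
rewrite continuant_windowSSl !x_adm !mulr0 !add0r.
by move/(mulfI c_neq0).
Qed.

Lemma admissible_penultimate_shift i k :
  P (i + k%:Z) n.+1 = if odd k then P (i + 1) n.+1 else P i n.+1.
Proof.
elim/ltn_ind: k => -[|[|k]] IH; rewrite ?addr0 //.
by rewrite -addn2 PoszD addrA admissible_penultimate_shift2 IH ?oddD ?addbF.
Qed.

Lemma admissible_glide j : x (j + n.+3%:Z) * P j n.+1 = x j * P (j + 1) n.+1.
Proof.
have ext_j : P j n.+3 = c * P j n.+1 by rewrite continuant_windowSSr x_adm mulr0 add0r.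
have ext_j1 : P (j + 1) n.+3 = c * P (j + 1) n.+1.
  by rewrite continuant_windowSSr x_adm mulr0 add0r.
have := continuant_windowSSr c x j n.+2.
rewrite continuant_windowSSl ext_j1 ext_j !x_adm !mulr0 !addr0 => glide.
by apply: (mulfI c_neq0); rewrite mulrCA -glide mulrCA.
Qed.

Lemma admissible_translate i m :
  P (i + n.+3%:Z) m = P i m * (if odd m then P (i + 1) n.+1 / P i n.+1 else 1).
Proof.
have Pi_neq0 := admissible_penultimate_neq0 i.
have Pi1_neq0 := admissible_penultimate_neq0 (i + 1).
apply: (continuant_window_scale c (u := P i n.+1 / P (i + 1) n.+1)).
  by rewrite mulrA divfK // divff.
move=> k; rewrite addrAC.
have -> : x (i + k%:Z + n.+3%:Z) = x (i + k%:Z) * P (i + k.+1%:Z) n.+1 / P (i + k%:Z) n.+1.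
  by rewrite -[k.+1]addn1 PoszD addrA -admissible_glide mulfK ?admissible_penultimate_neq0.
by rewrite -mulrA (admissible_penultimate_shift i k) (admissible_penultimate_shift i k.+1) /=; case: (odd k).
Qed.

Lemma admissible_translate_even i m : ~~ odd m -> P (i + n.+3%:Z) m = P i m.
Proof. by move=> m_even; rewrite admissible_translate (negbTE m_even) mulr1. Qed.

Lemma admissible_translate_twice i m : ~~ odd n -> P (i + (2 * n + 6)%N%:Z) m = P i m.
Proof.
move=> n_even; rewrite (_ : (2 * n + 6 = n.+3 + n.+3)%N) ?PoszD ?addrA; last by lia.
rewrite !admissible_translate -addrA -PoszD addn1 (admissible_penultimate_shift i n.+4) /=.
rewrite n_even -mulrA.
have := admissible_penultimate_neq0 i; have := admissible_penultimate_neq0 (i + 1).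
by case: (odd m) => // Pi1_neq0 Pi_neq0; field; first exact/andP.
Qed.

End Admissible.

Section RowPeriods.
Variables (K : fieldType) (f : int -> int -> K) (k : int).

Lemma row_has_period_subn p q :
  row_has_period f k p -> row_has_period f k q -> (q < p)%N -> row_has_period f k (p - q).
Proof.
move=> [_ f_p] [_ f_q] q_lt_p; split=> [|i]; first by rewrite subn_gt0.
have := f_q (i + (p - q)%N%:Z).
rewrite (_ : i + (p - q)%N%:Z + q%:Z = i + p%:Z); last by lia.
rewrite (_ : i + (p - q)%N%:Z + k - 1 + q%:Z = i + k - 1 + p%:Z); last by lia.
rewrite f_p => ->; congr f; lia.
Qed.

Lemma row_least_period_dvdn p P :
  row_least_period f k p -> row_has_period f k P -> (p %| P)%N.
Proof.
move=> [f_p p_least]; elim/ltn_ind: P => P IH f_P.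
case: (ltngtP P p) => [P_lt_p | p_lt_P | -> //].
  by case: (p_least P); rewrite ?P_lt_p ?andbT //; case: f_P.
rewrite -(subnK (ltnW p_lt_P)) dvdn_add ?dvdnn //.
by apply: IH (row_has_period_subn f_P f_p p_lt_P); rewrite ltn_subrL; case: f_p => ->; case: f_P.
Qed.

Lemma exists_row_least_period_dvdn P :
  row_has_period f k P -> exists p, row_least_period f k p /\ (p %| P)%N.
Proof.
elim/ltn_ind: P => P IH f_P.
case: (classic (exists q, (0 < q < P)%N /\ row_has_period f k q)).
  move=> [q [/andP [_ q_lt_P] f_q]]; have [p [f_p p_dvd_q]] := IH q q_lt_P f_q.
  by exists p; split => //; apply: row_least_period_dvdn f_p f_P.
move=> no_smaller; exists P; split=> //; split=> // q q_range f_q.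
by apply: no_smaller; exists q.
Qed.

End RowPeriods.

Lemma frieze_row_has_period (K : fieldType) (c : K) (n : nat) (f : int -> int -> K)
    (x : int -> K) (k : int) (p : nat) :
    (forall i j : int, -2 <= j - i <= n%:Z + 1 -> f i j = frieze_value c x i j) ->
    -1 <= k <= n%:Z + 2 -> (0 < p)%N ->
    (forall i, continuant c (window x (i + p%:Z) `|k|%N) = continuant c (window x i `|k|%N)) ->
  row_has_period f k p.
Proof.
move=> f_x /andP [k_ge k_le] p_gt0 x_period; split=> // i.
have row_value j : f j (j + k - 1) = if k < 0 then 0 else continuant c (window x j `|k|%N).
  rewrite f_x /frieze_value; last by apply/andP; split; lia.
  by rewrite (_ : j + k - 1 - j + 1 = k) //; lia.
rewrite (_ : i + k - 1 + p%:Z = i + p%:Z + k - 1); last by lia.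
by rewrite !row_value x_period.
Qed.

Theorem mainTheorem11 (K : fieldType) (c : K) (n : nat) (f : int -> int -> K) :
  c != 0 -> (1 <= n)%N -> is_frieze c n f ->
  (forall k : int, -1 <= k <= n%:Z + 2 -> (2 %| k)%Z ->
     exists p : nat, row_least_period f k p /\ (p %| n + 3)%N) /\
  (~~ odd n -> forall k : int, -1 <= k <= n%:Z + 2 -> ~~ (2 %| k)%Z ->
     exists p : nat, row_least_period f k p /\ (p %| 2 * n + 6)%N).
Proof.
move=> c_neq0 _ [x [x_adm f_x]].
split=> [k k_range k_even | n_even k k_range _];
  apply: exists_row_least_period_dvdn; apply: (frieze_row_has_period f_x k_range) => [|i]; try lia.
- by rewrite addn3 admissible_translate_even // -dvdn2.
- exact: admissible_translate_twice.
Qed.
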